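(* Let $\mathcal{A}$ be a Banach algebra (real or complex) with nonzero identity $e$, and let $x\in\mathcal{A}$ be such that the partial sums $\sum_{j=0}^n x^j$, $n\ge0$, are uniformly bounded in norm. Then for $0\le r<1$ the series $\sum_{j=0}^\infty r^j x^j$ converges absolutely and equals $(e-rx)^{-1}$, these inverses are bounded in norm uniformly in $r\in[0,1)$, and $e-x$ is invertible in $\mathcal{A}$.
   Context: A Banach algebra is an associative algebra $\mathcal{A}$ over $\mathbb{R}$ or $\mathbb{C}$ with nonzero multiplicative identity $e$, complete with respect to a norm satisfying $\|ab\|\le\|a\|\,\|b\|$ and $\|e\|=1$. Powers are $x^0=e$, $x^{j+1}=x^jx$. *)

From Stdlib Require Import Reals.
Open Scope R_scope.

Record BanachAlgebra := {
  car :> Type;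
  add : car -> car -> car;
  zero : car;
  opp : car -> car;
  scal : R -> car -> car;
  mul : car -> car -> car;
  one : car;
  norm : car -> R;
  add_assoc : forall a b c, add a (add b c) = add (add a b) c;
  add_comm : forall a b, add a b = add b a;
  add_zero : forall a, add a zero = a;
  add_opp : forall a, add a (opp a) = zero;
  scal_assoc : forall s t a, scal s (scal t a) = scal (s * t) a;
  scal_one : forall a, scal 1 a = a;
  scal_distr_l : forall s a b, scal s (add a b) = add (scal s a) (scal s b);
  scal_distr_r : forall s t a, scal (s + t) a = add (scal s a) (scal t a);
  mul_assoc : forall a b c, mul a (mul b c) = mul (mul a b) c;
  mul_one_l : forall a, mul one a = a;
  mul_one_r : forall a, mul a one = a;
  mul_add_l : forall a b c, mul (add a b) c = add (mul a c) (mul b c);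
  mul_add_r : forall a b c, mul a (add b c) = add (mul a b) (mul a c);
  mul_scal_l : forall s a b, mul (scal s a) b = scal s (mul a b);
  mul_scal_r : forall s a b, mul a (scal s b) = scal s (mul a b);
  one_neq_zero : one <> zero;
  norm_nonneg : forall a, 0 <= norm a;
  norm_eq_zero : forall a, norm a = 0 -> a = zero;
  norm_zero : norm zero = 0;
  norm_triangle : forall a b, norm (add a b) <= norm a + norm b;
  norm_scal : forall s a, norm (scal s a) = Rabs s * norm a;
  norm_mul : forall a b, norm (mul a b) <= norm a * norm b;
  norm_one : norm one = 1;
  complete : forall u : nat -> car,
    (forall eps, eps > 0 -> exists N, forall m n, (m >= N)%nat -> (n >= N)%nat ->
        norm (add (u m) (opp (u n))) < eps) ->
    exists l, forall eps, eps > 0 -> exists N, forall n, (n >= N)%nat ->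
        norm (add (u n) (opp l)) < eps
}.

Arguments add {_} _ _. Arguments zero {_}. Arguments opp {_} _. Arguments scal {_} _ _.
Arguments mul {_} _ _. Arguments one {_}. Arguments norm {_} _.

Definition sub {A : BanachAlgebra} (a b : A) : A := add a (opp b).

Fixpoint powA {A : BanachAlgebra} (x : A) (n : nat) : A :=
  match n with
  | O => one
  | S j => mul (powA x j) x
  end.

Fixpoint sumA {A : BanachAlgebra} (f : nat -> A) (n : nat) : A :=
  match n with
  | O => f O
  | S j => add (sumA f j) (f (S j))
  end.

Definition cvA {A : BanachAlgebra} (u : nat -> A) (l : A) : Prop :=
  forall eps, eps > 0 -> exists N, forall n, (n >= N)%nat -> norm (sub (u n) l) < eps.

Definition is_inverse {A : BanachAlgebra} (a y : A) : Prop :=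
  mul a y = one /\ mul y a = one.

(* For 0 <= r < 1, the powers of r x decay geometrically (the powers of x are bounded
   by 2M when the partial sums are bounded by M), so the Neumann series of r x converges
   absolutely to (e - r x)^-1. Abel summation writes its partial sums as convex
   combinations of the partial sums of x, which bounds the inverses by M uniformly in r.
   Finally, with y = (e - r x)^-1, one has e - x = (e - r x)(e - (1 - r) y x), and for r
   close to 1 the second factor is a small perturbation of e, hence invertible. *)
From Stdlib Require Import Reals Lra Lia.
Open Scope R_scope.

Arguments add_assoc {_} _ _ _. Arguments add_comm {_} _ _. Arguments add_zero {_} _.
Arguments add_opp {_} _. Arguments scal_assoc {_} _ _ _. Arguments scal_one {_} _.
Arguments scal_distr_l {_} _ _ _. Arguments scal_distr_r {_} _ _ _.
Arguments mul_assoc {_} _ _ _. Arguments mul_one_l {_} _. Arguments mul_one_r {_} _.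
Arguments mul_add_l {_} _ _ _. Arguments mul_add_r {_} _ _ _.
Arguments mul_scal_l {_} _ _ _. Arguments mul_scal_r {_} _ _ _.
Arguments norm_nonneg {_} _. Arguments norm_eq_zero {_} _ _. Arguments norm_triangle {_} _ _.
Arguments norm_scal {_} _ _. Arguments norm_mul {_} _ _. Arguments norm_one {_}.

Section Algebra.
Variable A : BanachAlgebra.
Implicit Types a b c : A.

Lemma add_zero_l a : add zero a = a.
Proof. rewrite add_comm; apply add_zero. Qed.

Lemma add_cancel_l a b c : add a b = add a c -> b = c.
Proof.
  intro H. rewrite <- (add_zero_l b), <- (add_zero_l c).
  rewrite <- (add_opp a), (add_comm a (opp a)), <- !add_assoc, H. reflexivity.
Qed.

Lemma opp_unique a b : add a b = zero -> b = opp a.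
Proof. intro H. apply (add_cancel_l a). rewrite H, add_opp. reflexivity. Qed.

Lemma opp_opp a : opp (opp a) = a.
Proof. symmetry. apply opp_unique. rewrite add_comm; apply add_opp. Qed.

Lemma opp_add a b : opp (add a b) = add (opp a) (opp b).
Proof.
  symmetry. apply opp_unique.
  rewrite (add_comm (opp a) (opp b)), add_assoc, <- (add_assoc a b), add_opp, add_zero, add_opp.
  reflexivity.
Qed.

Lemma mul_zero_l a : mul zero a = zero.
Proof.
  apply (add_cancel_l (mul zero a)). rewrite add_zero, <- mul_add_l, add_zero. reflexivity.
Qed.

Lemma mul_zero_r a : mul a zero = zero.
Proof.
  apply (add_cancel_l (mul a zero)). rewrite add_zero, <- mul_add_r, add_zero. reflexivity.
Qed.

Lemma mul_sub_r a b c : mul a (sub b c) = sub (mul a b) (mul a c).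
Proof.
  unfold sub. rewrite mul_add_r. f_equal.
  apply opp_unique. rewrite <- mul_add_r, add_opp, mul_zero_r. reflexivity.
Qed.

Lemma mul_sub_l a b c : mul (sub a b) c = sub (mul a c) (mul b c).
Proof.
  unfold sub. rewrite mul_add_l. f_equal.
  apply opp_unique. rewrite <- mul_add_l, add_opp, mul_zero_l. reflexivity.
Qed.

Lemma add_sub_sub a b c : add (sub a b) (sub b c) = sub a c.
Proof.
  unfold sub. rewrite <- add_assoc, (add_assoc (opp b)), (add_comm (opp b) b), add_opp, add_zero_l.
  reflexivity.
Qed.

Lemma add_sub a b : add b (sub a b) = a.
Proof. unfold sub. rewrite add_assoc, (add_comm b a), <- add_assoc, add_opp, add_zero. reflexivity. Qed.

Lemma sub_diag a : sub a a = zero.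
Proof. apply add_opp. Qed.

Lemma sub_add_l a b c : sub (add a b) c = add (sub a c) b.
Proof. unfold sub. rewrite <- !add_assoc, (add_comm b). reflexivity. Qed.

Lemma sub_sub a b c : sub (sub a b) c = sub a (add b c).
Proof. unfold sub. rewrite opp_add, add_assoc. reflexivity. Qed.

Lemma sub_sub_l a b : sub (sub a b) a = opp b.
Proof.
  unfold sub. rewrite <- add_assoc, (add_comm (opp b)), add_assoc, add_opp, add_zero_l.
  reflexivity.
Qed.

Lemma sub_eq0 a b : sub a b = zero -> a = b.
Proof.
  intro H. rewrite <- (opp_opp b). apply opp_unique. rewrite add_comm. exact H.
Qed.

Lemma scal0 a : scal 0 a = zero.
Proof.
  apply (add_cancel_l (scal 0 a)). rewrite add_zero, <- scal_distr_r, Rplus_0_r. reflexivity.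
Qed.

Lemma scalN1 a : scal (-1) a = opp a.
Proof.
  apply opp_unique. rewrite <- (scal_one a) at 1. rewrite <- scal_distr_r.
  replace (1 + -1) with 0 by ring. apply scal0.
Qed.

Lemma norm_opp a : norm (opp a) = norm a.
Proof. rewrite <- scalN1, norm_scal, Rabs_left by lra. ring. Qed.

Lemma norm_sub_sym a b : norm (sub a b) = norm (sub b a).
Proof.
  rewrite <- norm_opp. f_equal. unfold sub. rewrite opp_add, opp_opp, add_comm. reflexivity.
Qed.

Lemma sumA_S (f : nat -> A) n : sumA f (S n) = add (sumA f n) (f (S n)).
Proof. reflexivity. Qed.

Lemma sumA_ext (f g : nat -> A) n : (forall j, f j = g j) -> sumA f n = sumA g n.
Proof. intro E. induction n as [|n IHn]; simpl; now rewrite ?IHn, E. Qed.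

Lemma is_inverse_unique a y z : is_inverse a y -> is_inverse a z -> y = z.
Proof.
  intros [_ Hya] [Haz _].
  rewrite <- (mul_one_r y), <- Haz, mul_assoc, Hya, mul_one_l. reflexivity.
Qed.

Lemma is_inverse_mul a b y z : is_inverse a y -> is_inverse b z -> is_inverse (mul a b) (mul z y).
Proof.
  intros [Hay Hya] [Hbz Hzb]. split.
  - rewrite <- mul_assoc, (mul_assoc b z), Hbz, mul_one_l. exact Hay.
  - rewrite <- mul_assoc, (mul_assoc y a), Hya, mul_one_l. exact Hzb.
Qed.

End Algebra.

Section Limits.
Variable A : BanachAlgebra.
Implicit Types (a : A) (u v : nat -> A).

Lemma cvA_unique u l1 l2 : cvA u l1 -> cvA u l2 -> l1 = l2.
Proof.
  intros H1 H2. apply sub_eq0, norm_eq_zero.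
  apply Rle_antisym; [|apply norm_nonneg].
  apply Rnot_lt_le; intro Hpos.
  destruct (H1 (norm (sub l1 l2) / 2)) as [N1 HN1]; [lra|].
  destruct (H2 (norm (sub l1 l2) / 2)) as [N2 HN2]; [lra|].
  specialize (HN1 (N1 + N2)%nat ltac:(lia)). specialize (HN2 (N1 + N2)%nat ltac:(lia)).
  pose proof (norm_triangle (sub l1 (u (N1 + N2)%nat)) (sub (u (N1 + N2)%nat) l2)) as Htri.
  rewrite add_sub_sub, (norm_sub_sym _ l1 (u _)) in Htri. lra.
Qed.

Lemma cvA_dominated u v l m K : 0 <= K -> cvA u l ->
  (forall n, norm (sub (v n) m) <= K * norm (sub (u n) l)) -> cvA v m.
Proof.
  intros HK Hu Hdom eps Heps.
  destruct (Hu (eps / (K + 1))) as [N HN]; [apply Rdiv_lt_0_compat; lra|].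
  exists N. intros n Hn. specialize (HN n Hn).
  apply Rle_lt_trans with ((K + 1) * norm (sub (u n) l)).
  - pose proof (Hdom n). pose proof (norm_nonneg (sub (u n) l)). nra.
  - apply Rmult_lt_reg_l with (/ (K + 1)); [apply Rinv_0_lt_compat; lra|].
    rewrite <- Rmult_assoc, Rinv_l by lra. unfold Rdiv in HN. lra.
Qed.

Lemma cvA_ext u v l : (forall n, u n = v n) -> cvA u l -> cvA v l.
Proof.
  intros E Hu. apply (cvA_dominated u v l l 1); [lra|exact Hu|].
  intro n. rewrite E. lra.
Qed.

Lemma cvA_mul_l c u l : cvA u l -> cvA (fun n => mul c (u n)) (mul c l).
Proof.
  intro Hu. apply (cvA_dominated u _ l _ (norm c)); [apply norm_nonneg|exact Hu|].
  intro n. rewrite <- mul_sub_r. apply norm_mul.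
Qed.

Lemma cvA_mul_r c u l : cvA u l -> cvA (fun n => mul (u n) c) (mul l c).
Proof.
  intro Hu. apply (cvA_dominated u _ l _ (norm c)); [apply norm_nonneg|exact Hu|].
  intro n. rewrite <- mul_sub_l, Rmult_comm. apply norm_mul.
Qed.

Lemma cvA_norm_le u l M : cvA u l -> (forall n, norm (u n) <= M) -> norm l <= M.
Proof.
  intros Hu HM. apply Rnot_lt_le; intro Hgt.
  destruct (Hu (norm l - M)) as [N HN]; [lra|].
  specialize (HN N (le_n _)). specialize (HM N).
  pose proof (norm_triangle (u N) (sub l (u N))) as Htri.
  rewrite add_sub, norm_sub_sym in Htri. lra.
Qed.

Lemma norm_sumA_sub_le (f : nat -> A) n k :
  norm (sub (sumA f (n + k)) (sumA f n)) <=
  sum_f_R0 (fun j => norm (f j)) (n + k) - sum_f_R0 (fun j => norm (f j)) n.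
Proof.
  induction k as [|k IHk].
  - rewrite Nat.add_0_r, sub_diag, norm_zero. lra.
  - rewrite Nat.add_succ_r. simpl sumA. rewrite tech5, sub_add_l.
    eapply Rle_trans; [apply norm_triangle|]. lra.
Qed.

(* Completeness enters here: absolute convergence makes the partial sums Cauchy. *)
Lemma cvA_sumA_of_abs_cv (f : nat -> A) s :
  Un_cv (sum_f_R0 (fun j => norm (f j))) s -> exists z, cvA (sumA f) z.
Proof.
  intro Hs. apply complete. intros eps Heps.
  destruct (CV_Cauchy _ (exist _ s Hs) eps Heps) as [N HN]. exists N.
  assert (Hle : forall m n, (n <= m)%nat -> (n >= N)%nat ->
            norm (sub (sumA f m) (sumA f n)) < eps).
  { intros m n Hnm Hn. replace m with (n + (m - n))%nat by lia.
    eapply Rle_lt_trans; [apply norm_sumA_sub_le|].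
    eapply Rle_lt_trans; [apply Rle_abs|]. apply (HN _ n); lia. }
  intros m n Hm Hn. change (norm (sub (sumA f m) (sumA f n)) < eps).
  destruct (Nat.le_ge_cases n m) as [Hnm|Hmn].
  - now apply Hle.
  - rewrite norm_sub_sym. now apply Hle.
Qed.

End Limits.

Section Neumann.
Variable A : BanachAlgebra.
Implicit Types a : A.

Lemma powA_succ_l a n : mul a (powA a n) = powA a (S n).
Proof.
  induction n as [|n IHn]; simpl.
  - rewrite mul_one_r, mul_one_l. reflexivity.
  - rewrite mul_assoc. simpl in IHn. rewrite IHn. reflexivity.
Qed.

Lemma norm_powA_le a n : norm (powA a n) <= norm a ^ n.
Proof.
  induction n as [|n IHn]; simpl.
  - rewrite norm_one. lra.
  - eapply Rle_trans; [apply norm_mul|]. rewrite Rmult_comm.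
    apply Rmult_le_compat_l; [apply norm_nonneg|exact IHn].
Qed.

Lemma powA_scal r a n : powA (scal r a) n = scal (r ^ n) (powA a n).
Proof.
  induction n as [|n IHn]; simpl.
  - rewrite scal_one. reflexivity.
  - rewrite IHn, mul_scal_l, mul_scal_r, scal_assoc. f_equal. ring.
Qed.

Lemma mul_one_sub_sumA_powA a n : mul (sub one a) (sumA (powA a) n) = sub one (powA a (S n)).
Proof.
  induction n as [|n IHn].
  - simpl. rewrite mul_one_r, mul_one_l. reflexivity.
  - rewrite sumA_S, mul_add_r, IHn, mul_sub_l, mul_one_l, powA_succ_l, add_sub_sub. reflexivity.
Qed.

Lemma mul_sumA_powA_one_sub a n : mul (sumA (powA a) n) (sub one a) = sub one (powA a (S n)).
Proof.
  induction n as [|n IHn].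
  - simpl. rewrite !mul_one_l. reflexivity.
  - rewrite sumA_S, mul_add_l, IHn, mul_sub_r, mul_one_r, add_sub_sub. reflexivity.
Qed.

Section GeometricDecay.
Variables (a : A) (C q : R).
Hypothesis q_ge0 : 0 <= q.
Hypothesis q_lt1 : q < 1.
Hypothesis norm_powA_geometric : forall j, norm (powA a j) <= C * q ^ j.

Lemma abs_cv_powA : exists s, Un_cv (sum_f_R0 (fun j => norm (powA a j))) s.
Proof.
  assert (Hgeo : {l | Un_cv (sum_f_R0 (fun j => C * q ^ j)) l}).
  { exists (C * / (1 - q)).
    pose proof (GP_infinite q ltac:(rewrite Rabs_pos_eq; lra)) as Hgp.
    assert (Hcst : Un_cv (fun _ => C) C).
    { intros e He. exists O. intros. unfold Rdist. rewrite Rminus_diag, Rabs_R0. lra. }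
    eapply Un_cv_ext; [|exact (CV_mult _ _ _ _ Hcst Hgp)].
    intro n. simpl. rewrite scal_sum. apply sum_eq. intros. ring. }
  destruct (Rseries_CV_comp _ _ (fun j => conj (norm_nonneg _) (norm_powA_geometric j)) Hgeo)
    as [s Hs].
  now exists s.
Qed.

Lemma cvA_one_sub_powA : cvA (fun n => sub one (powA a (S n))) one.
Proof.
  assert (HC : 0 < C).
  { pose proof (norm_powA_geometric O) as H0. simpl in H0. rewrite norm_one in H0. lra. }
  intros eps Heps.
  destruct (pow_lt_1_zero q ltac:(rewrite Rabs_pos_eq; lra) (eps / C)) as [N HN].
  { apply Rdiv_lt_0_compat; lra. }
  exists N. intros n Hn.
  rewrite sub_sub_l, norm_opp.
  eapply Rle_lt_trans; [apply norm_powA_geometric|].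
  specialize (HN (S n) ltac:(lia)). rewrite Rabs_pos_eq in HN by (apply pow_le; lra).
  apply Rmult_lt_reg_l with (/ C); [apply Rinv_0_lt_compat; lra|].
  rewrite <- Rmult_assoc, Rinv_l by lra. unfold Rdiv in HN. lra.
Qed.

Lemma neumann_series :
  (exists s, Un_cv (sum_f_R0 (fun j => norm (powA a j))) s) /\
  exists z, cvA (sumA (powA a)) z /\ is_inverse (sub one a) z.
Proof.
  split; [exact abs_cv_powA|].
  destruct abs_cv_powA as [s Hs].
  destruct (cvA_sumA_of_abs_cv _ _ _ Hs) as [z Hz].
  exists z. split; [exact Hz|]. split.
  - apply (cvA_unique _ (fun n => mul (sub one a) (sumA (powA a) n))).
    + now apply cvA_mul_l.
    + eapply cvA_ext; [|exact cvA_one_sub_powA].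
      intro n. symmetry. apply mul_one_sub_sumA_powA.
  - apply (cvA_unique _ (fun n => mul (sumA (powA a) n) (sub one a))).
    + now apply cvA_mul_r.
    + eapply cvA_ext; [|exact cvA_one_sub_powA].
      intro n. symmetry. apply mul_sumA_powA_one_sub.
Qed.

End GeometricDecay.

Lemma is_inverse_one_sub_of_norm_lt1 a : norm a < 1 -> exists w, is_inverse (sub one a) w.
Proof.
  intro Ha.
  destruct (neumann_series a 1 (norm a) (norm_nonneg a) Ha) as [_ [w [_ Hw]]].
  - intro j. rewrite Rmult_1_l. apply norm_powA_le.
  - now exists w.
Qed.

End Neumann.

Section AbelSummation.
Variable A : BanachAlgebra.
Variables (f : nat -> A) (c : nat -> R).

Lemma abel_summation n :
  sumA (fun j => scal (c j) (f j)) n =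
  add (sumA (fun j => scal (c j - c (S j)) (sumA f j)) n) (scal (c (S n)) (sumA f n)).
Proof.
  induction n as [|n IHn]; simpl sumA.
  - rewrite <- scal_distr_r. f_equal. ring.
  - rewrite IHn, <- !add_assoc. f_equal.
    rewrite <- scal_distr_l, <- scal_distr_r.
    replace (c (S n) - c (S (S n)) + c (S (S n))) with (c (S n)) by ring.
    reflexivity.
Qed.

Variable M : R.
Hypothesis c_nonneg : forall j, 0 <= c j.
Hypothesis c_nonincreasing : forall j, c (S j) <= c j.
Hypothesis norm_sumA_le : forall n, norm (sumA f n) <= M.

Lemma norm_sumA_scal_le n : norm (sumA (fun j => scal (c j) (f j)) n) <= c O * M.
Proof.
  assert (HM : 0 <= M) by (eapply Rle_trans; [apply (norm_nonneg (sumA f O))|apply (norm_sumA_le O)]).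
  assert (Hdiff : forall j, norm (scal (c j - c (S j)) (sumA f j)) <= (c j - c (S j)) * M).
  { intro j. rewrite norm_scal, Rabs_pos_eq by (pose proof (c_nonincreasing j); lra).
    apply Rmult_le_compat_l; [pose proof (c_nonincreasing j); lra|apply norm_sumA_le]. }
  assert (Hbody : forall m,
    norm (sumA (fun j => scal (c j - c (S j)) (sumA f j)) m) <= (c O - c (S m)) * M).
  { induction m as [|m IHm]; [apply Hdiff|]. rewrite sumA_S.
    eapply Rle_trans; [apply norm_triangle|].
    pose proof (Hdiff (S m)).
    replace ((c O - c (S (S m))) * M)
      with ((c O - c (S m)) * M + (c (S m) - c (S (S m))) * M) by ring.
    lra. }
  rewrite abel_summation. eapply Rle_trans; [apply norm_triangle|].
  rewrite norm_scal, Rabs_pos_eq by apply c_nonneg.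
  pose proof (Hbody n). pose proof (norm_sumA_le n). pose proof (c_nonneg (S n)).
  assert (c (S n) * norm (sumA f n) <= c (S n) * M) by (apply Rmult_le_compat_l; lra).
  lra.
Qed.

End AbelSummation.

Section BoundedPartialSums.
Variables (A : BanachAlgebra) (x : A) (M : R).
Hypothesis norm_partial_sums_le : forall n, norm (sumA (powA x) n) <= M.

Lemma one_le_partial_sums_bound : 1 <= M.
Proof. pose proof (norm_partial_sums_le O) as H. simpl in H. now rewrite norm_one in H. Qed.

Lemma norm_powA_le_twice_bound j : norm (powA x j) <= 2 * M.
Proof.
  pose proof one_le_partial_sums_bound.
  destruct j as [|j]; [simpl; rewrite norm_one; lra|].
  replace (powA x (S j)) with (sub (sumA (powA x) (S j)) (sumA (powA x) j))
    by (simpl sumA; rewrite sub_add_l, sub_diag, add_zero_l; reflexivity).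
  unfold sub. eapply Rle_trans; [apply norm_triangle|].
  rewrite norm_opp. pose proof (norm_partial_sums_le (S j)). pose proof (norm_partial_sums_le j).
  lra.
Qed.

Lemma neumann_series_scal r : 0 <= r < 1 ->
  (exists s, Un_cv (sum_f_R0 (fun j => norm (scal (r ^ j) (powA x j)))) s) /\
  (exists y, cvA (sumA (fun j => scal (r ^ j) (powA x j))) y /\
             is_inverse (sub one (scal r x)) y).
Proof.
  intros Hr.
  destruct (neumann_series A (scal r x) (2 * M) r (proj1 Hr) (proj2 Hr)) as [[s Hs] [y [Hy Hinv]]].
  { intro j. rewrite powA_scal, norm_scal, Rabs_pos_eq by (apply pow_le; lra).
    pose proof (norm_powA_le_twice_bound j). pose proof (pow_le r j (proj1 Hr)).
    rewrite Rmult_comm. apply Rmult_le_compat_r; lra. }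
  split.
  - exists s. eapply Un_cv_ext; [|exact Hs].
    intro n. apply sum_eq. intros. now rewrite powA_scal.
  - exists y. split; [|exact Hinv]. eapply cvA_ext; [|exact Hy].
    intro n. apply sumA_ext. intro j. apply powA_scal.
Qed.

Lemma norm_inverse_one_sub_scal_le r y : 0 <= r < 1 ->
  is_inverse (sub one (scal r x)) y -> norm y <= M.
Proof.
  intros Hr Hy. destruct (neumann_series_scal r Hr) as [_ [z [Hz Hinv]]].
  rewrite (is_inverse_unique _ _ _ _ Hy Hinv).
  apply (cvA_norm_le _ _ _ _ Hz). intro n.
  replace M with (r ^ 0 * M) by (simpl; ring).
  apply norm_sumA_scal_le; [intro j; apply pow_le; lra| |exact norm_partial_sums_le].
  intro j. simpl. pose proof (pow_le r j (proj1 Hr)). nra.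
Qed.

End BoundedPartialSums.

Lemma one_sub_factor (A : BanachAlgebra) (x y : A) r :
  is_inverse (sub one (scal r x)) y ->
  sub one x = mul (sub one (scal r x)) (sub one (scal (1 - r) (mul y x))).
Proof.
  intros [Hy _].
  rewrite mul_sub_r, mul_one_r, mul_scal_r, mul_assoc, Hy, mul_one_l.
  rewrite sub_sub, <- scal_distr_r. replace (r + (1 - r)) with 1 by ring.
  now rewrite scal_one.
Qed.

(* r is chosen with (1 - r) K = 1/2 for K >= M |x| + 1, so that |(1 - r) y x| < 1. *)
Lemma is_inverse_one_sub_of_bounded_resolvent (A : BanachAlgebra) (x : A) M :
  (forall r, 0 <= r < 1 -> exists y, is_inverse (sub one (scal r x)) y /\ norm y <= M) ->
  exists w, is_inverse (sub one x) w.
Proof.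
  intro Hres.
  set (K := Rmax 1 (M * norm x + 1)).
  assert (HK : 1 <= K) by apply Rmax_l.
  set (r := 1 - / (2 * K)).
  assert (Hr1 : (1 - r) * K = 1 / 2) by (unfold r; field; lra).
  assert (Hr : 0 <= r < 1).
  { assert (0 < / (2 * K)) by (apply Rinv_0_lt_compat; lra). unfold r in *. nra. }
  destruct (Hres r Hr) as [y [Hy Hyn]].
  assert (Hsmall : norm (scal (1 - r) (mul y x)) < 1).
  { rewrite norm_scal, Rabs_pos_eq by lra.
    pose proof (norm_mul y x). pose proof (norm_nonneg x).
    assert (norm (mul y x) <= M * norm x) by nra.
    assert (M * norm x + 1 <= K) by apply Rmax_r.
    nra. }
  destruct (is_inverse_one_sub_of_norm_lt1 A _ Hsmall) as [w Hw].
  exists (mul w y). rewrite (one_sub_factor _ _ _ _ Hy).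
  now apply is_inverse_mul.
Qed.

Theorem mainTheorem6 (A : BanachAlgebra) (x : A)
  (Hbdd : exists M : R, forall n : nat, norm (sumA (fun j => powA x j) n) <= M) :
  (forall r : R, 0 <= r < 1 ->
     (exists s : R, Un_cv (sum_f_R0 (fun j => norm (scal (r ^ j) (powA x j)))) s) /\
     (exists y : A, cvA (sumA (fun j => scal (r ^ j) (powA x j))) y /\
                    is_inverse (sub one (scal r x)) y)) /\
  (exists M : R, forall (r : R) (y : A), 0 <= r < 1 ->
     is_inverse (sub one (scal r x)) y -> norm y <= M) /\
  (exists y : A, is_inverse (sub one x) y).
Proof.
  destruct Hbdd as [M HM].
  split; [exact (neumann_series_scal A x M HM)|].
  split; [exists M; exact (norm_inverse_one_sub_scal_le A x M HM)|].
  apply (is_inverse_one_sub_of_bounded_resolvent A x M).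
  intros r Hr. destruct (neumann_series_scal A x M HM r Hr) as [_ [y [_ Hy]]].
  exists y. split; [exact Hy|exact (norm_inverse_one_sub_scal_le A x M HM r y Hr Hy)].
Qed.
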